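(* Let $0\le v\le 1$, $r\neq 0$ and $a,b>0$, and let $\mu:=\min\{1-v,v\}$. If either (i) $r>0$ and $0<a\le b$, or (ii) $r<0$ and $a\ge b>0$, then $$G_v(a,b)\le \left\{1+\frac{\mu^2}{2}\left(\ln_r\frac{a}{b}\right)^2\right\}G_v(a,b)\le A_v(a,b).$$
   Context: For $a,b>0$ and $0\le v\le 1$: $A_v(a,b):=(1-v)a+vb$ and $G_v(a,b):=a^{1-v}b^v$. For $x>0$ and $r\neq 0$, the $r$-logarithm is $\ln_r x:=\frac{x^r-1}{r}$. *)

From Stdlib Require Import Reals.
Open Scope R_scope.

Definition A_v (v a b : R) : R := (1 - v) * a + v * b.

Definition G_v (v a b : R) : R := Rpower a (1 - v) * Rpower b v.

Definition ln_r (r x : R) : R := (Rpower x r - 1) / r.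

From Stdlib Require Import Reals Lra.
From Coquelicot Require Import Coquelicot.
Open Scope R_scope.

(* With t = ln (a/b), homogeneity gives A_v(a,b) = G_v(a,b) phi(t), where
   phi(t) = (1-v) e^(vt) + v e^(-(1-v)t).  Here phi(0) = 1, phi'(0) = 0, and
   phi''(t) is the weighted arithmetic mean of v^2 e^(vt) and (1-v)^2 e^(-(1-v)t),
   whose geometric mean is the constant G_v(v^2, (1-v)^2) >= mu^2; hence
   phi(t) >= 1 + mu^2 t^2 / 2.  Either sign hypothesis means r t <= 0, and then
   |ln_r (a/b)| = |e^(rt) - 1| / |r| <= |t| because 1 + u <= e^u <= 1 for u <= 0. *)

Lemma tangent_le_of_second_derivative_nonneg (g g' g'' : R -> R) (x0 t : R) :
  (forall x, is_derive g x (g' x)) -> (forall x, is_derive g' x (g'' x)) ->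
  (forall x, 0 <= g'' x) -> g x0 + g' x0 * (t - x0) <= g t.
Proof.
  intros Dg Dg' Hg''.
  assert (D : forall x, derivable_pt_lim g x (g' x)) by (intro; apply is_derive_Reals, Dg).
  assert (D' : forall x, derivable_pt_lim g' x (g'' x)) by (intro; apply is_derive_Reals, Dg').
  destruct (Rtotal_order t x0) as [Ht | [-> | Ht]].
  - destruct (MVT_cor2 g g' t x0 Ht (fun c _ => D c)) as [c [Hc [Htc Hcx]]].
    destruct (MVT_cor2 g' g'' c x0 Hcx (fun d _ => D' d)) as [d [Hd _]].
    assert (g' c <= g' x0) by (pose proof (Hg'' d); nra). nra.
  - lra.
  - destruct (MVT_cor2 g g' x0 t Ht (fun c _ => D c)) as [c [Hc [Hxc Hct]]].
    destruct (MVT_cor2 g' g'' x0 c Hxc (fun d _ => D' d)) as [d [Hd _]].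
    assert (g' x0 <= g' c) by (pose proof (Hg'' d); nra). nra.
Qed.

Lemma G_v_eq_exp (v a b : R) : G_v v a b = exp ((1 - v) * ln a + v * ln b).
Proof. unfold G_v, Rpower. rewrite exp_plus. f_equal; ring. Qed.

Lemma G_v_pos (v a b : R) : 0 < G_v v a b.
Proof. rewrite G_v_eq_exp. apply exp_pos. Qed.

Lemma G_v_mul_exp (v x y p q : R) : 0 < x -> 0 < y ->
  G_v v (x * exp p) (y * exp q) = G_v v x y * exp ((1 - v) * p + v * q).
Proof.
  intros Hx Hy. rewrite !G_v_eq_exp, !ln_mult, !ln_exp by (auto; apply exp_pos).
  rewrite <- exp_plus. f_equal. ring.
Qed.

Lemma G_v_le_A_v (v a b : R) : 0 <= v <= 1 -> 0 < a -> 0 < b ->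
  G_v v a b <= A_v v a b.
Proof.
  intros Hv Ha Hb. rewrite G_v_eq_exp. unfold A_v.
  set (m := (1 - v) * ln a + v * ln b).
  assert (Hm := exp_pos m).
  (* [exp] lies above its tangent line at [m] *)
  assert (Ea : exp m * (1 + (ln a - m)) <= a).
  { rewrite <- (exp_ln a) at 2 by exact Ha.
    replace (ln a) with (m + (ln a - m)) at 2 by ring. rewrite exp_plus.
    apply Rmult_le_compat_l; [lra | apply exp_ineq1_le]. }
  assert (Eb : exp m * (1 + (ln b - m)) <= b).
  { rewrite <- (exp_ln b) at 2 by exact Hb.
    replace (ln b) with (m + (ln b - m)) at 2 by ring. rewrite exp_plus.
    apply Rmult_le_compat_l; [lra | apply exp_ineq1_le]. }
  replace (exp m) with (exp m * ((1 - v) * (1 + (ln a - m)) + v * (1 + (ln b - m))))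
    by (unfold m; ring).
  nra.
Qed.

Lemma Rmin_le_G_v (v a b : R) : 0 <= v <= 1 -> 0 < a -> 0 < b ->
  Rmin a b <= G_v v a b.
Proof.
  intros Hv Ha Hb. set (m := Rmin a b).
  assert (Hm : 0 < m) by (apply Rmin_glb_lt; assumption).
  assert (Hma := Rmin_l a b). assert (Hmb := Rmin_r a b).
  replace m with (Rpower m (1 - v) * Rpower m v)
    by (rewrite <- Rpower_plus; replace (1 - v + v) with 1 by ring; apply Rpower_1, Hm).
  unfold G_v. apply Rmult_le_compat.
  - left; apply exp_pos.
  - left; apply exp_pos.
  - apply Rle_Rpower_l; [lra | split; assumption].
  - apply Rle_Rpower_l; [lra | split; assumption].
Qed.

Definition AG_ratio (v t : R) : R := A_v v (exp (v * t)) (exp (- (1 - v) * t)).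

Lemma A_v_eq_G_v_mul_AG_ratio (v a b : R) : 0 < a -> 0 < b ->
  A_v v a b = G_v v a b * AG_ratio v (ln (a / b)).
Proof.
  intros Ha Hb. rewrite G_v_eq_exp, ln_div by assumption. unfold AG_ratio, A_v.
  set (m := (1 - v) * ln a + v * ln b).
  assert (Ea : exp m * exp (v * (ln a - ln b)) = a).
  { rewrite <- exp_plus. replace (m + v * (ln a - ln b)) with (ln a) by (unfold m; ring).
    apply exp_ln, Ha. }
  assert (Eb : exp m * exp (- (1 - v) * (ln a - ln b)) = b).
  { rewrite <- exp_plus. replace (m + - (1 - v) * (ln a - ln b)) with (ln b) by (unfold m; ring).
    apply exp_ln, Hb. }
  replace ((1 - v) * a + v * b)
    with ((1 - v) * (exp m * exp (v * (ln a - ln b))) + v * (exp m * exp (- (1 - v) * (ln a - ln b))))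
    by (rewrite Ea, Eb; reflexivity).
  ring.
Qed.

(* The right-hand side is the second derivative of [AG_ratio v] at [t]. *)
Lemma AG_ratio_second_derivative_ge (v t : R) : 0 <= v <= 1 ->
  Rmin (1 - v) v ^ 2 <= A_v v (v ^ 2 * exp (v * t)) ((1 - v) ^ 2 * exp (- (1 - v) * t)).
Proof.
  intros Hv.
  destruct (Req_dec v 0) as [-> | Hv0].
  { rewrite Rmin_right by lra. unfold A_v. pose proof (exp_pos (- (1 - 0) * t)). nra. }
  destruct (Req_dec v 1) as [-> | Hv1].
  { rewrite Rmin_left by lra. unfold A_v. pose proof (exp_pos (1 * t)). nra. }
  assert (Hsq : Rmin (1 - v) v ^ 2 <= Rmin (v ^ 2) ((1 - v) ^ 2)).
  { unfold Rmin. destruct (Rle_dec (1 - v) v), (Rle_dec (v ^ 2) ((1 - v) ^ 2)); nra. }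
  assert (HG : G_v v (v ^ 2 * exp (v * t)) ((1 - v) ^ 2 * exp (- (1 - v) * t))
               = G_v v (v ^ 2) ((1 - v) ^ 2)).
  { rewrite G_v_mul_exp by nra. replace ((1 - v) * (v * t) + v * (- (1 - v) * t)) with 0 by ring.
    rewrite exp_0. ring. }
  eapply Rle_trans; [exact Hsq |].
  eapply Rle_trans; [apply Rmin_le_G_v; [exact Hv | nra | nra] |].
  rewrite <- HG. apply G_v_le_A_v; [exact Hv | |]; apply Rmult_lt_0_compat; try apply exp_pos; nra.
Qed.

Lemma AG_ratio_ge (v t : R) : 0 <= v <= 1 ->
  1 + Rmin (1 - v) v ^ 2 / 2 * t ^ 2 <= AG_ratio v t.
Proof.
  intros Hv. set (k := Rmin (1 - v) v ^ 2).
  set (g := fun x => AG_ratio v x - k / 2 * x ^ 2).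
  set (g' := fun x => A_v v (v * exp (v * x)) (- (1 - v) * exp (- (1 - v) * x)) - k * x).
  assert (Hg : g 0 + g' 0 * (t - 0) <= g t).
  { apply tangent_le_of_second_derivative_nonneg with
      (g'' := fun x => A_v v (v ^ 2 * exp (v * x)) ((1 - v) ^ 2 * exp (- (1 - v) * x)) - k).
    - intro x. unfold g, g', AG_ratio, A_v. auto_derive; [exact I | field].
    - intro x. unfold g', A_v. auto_derive; [exact I | ring].
    - intro x. pose proof (AG_ratio_second_derivative_ge v x Hv). fold k in H. lra. }
  assert (Hg0 : g 0 + g' 0 * (t - 0) = 1).
  { unfold g, g', AG_ratio, A_v. rewrite !Rmult_0_r, exp_0. ring. }
  rewrite Hg0 in Hg. unfold g in Hg. lra.
Qed.

Lemma sqr_exp_sub_1_le (u : R) : u <= 0 -> (exp u - 1) ^ 2 <= u ^ 2.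
Proof.
  intros Hu.
  assert (Hup : exp u <= 1).
  { destruct (Rle_lt_or_eq_dec u 0 Hu) as [Hlt | ->].
    - rewrite <- exp_0. left. apply exp_increasing, Hlt.
    - rewrite exp_0. lra. }
  pose proof (exp_ineq1_le u). nra.
Qed.

Lemma ln_r_sqr_le (r x : R) : r <> 0 -> r * ln x <= 0 -> ln_r r x ^ 2 <= ln x ^ 2.
Proof.
  intros Hr Hrx. unfold ln_r, Rpower.
  assert (Hr2 : 0 < / r ^ 2) by (apply Rinv_0_lt_compat, pow2_gt_0, Hr).
  replace (((exp (r * ln x) - 1) / r) ^ 2) with ((exp (r * ln x) - 1) ^ 2 * / r ^ 2)
    by (field; exact Hr).
  replace (ln x ^ 2) with ((r * ln x) ^ 2 * / r ^ 2) by (field; exact Hr).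
  apply Rmult_le_compat_r; [lra | apply sqr_exp_sub_1_le, Hrx].
Qed.

Lemma mul_ln_div_nonpos (r a b : R) : 0 < a -> 0 < b ->
  (0 < r /\ a <= b) \/ (r < 0 /\ b <= a) -> r * ln (a / b) <= 0.
Proof.
  intros Ha Hb Hcase. rewrite ln_div by assumption.
  destruct Hcase as [[Hr Hab] | [Hr Hba]].
  - pose proof (ln_le a b Ha Hab). nra.
  - pose proof (ln_le b a Hb Hba). nra.
Qed.

Theorem corollary2p3 (v r a b : R) :
  0 <= v <= 1 -> r <> 0 -> 0 < a -> 0 < b ->
  ((0 < r /\ a <= b) \/ (r < 0 /\ b <= a)) ->
  let mu := Rmin (1 - v) v in
  G_v v a b <= (1 + mu ^ 2 / 2 * (ln_r r (a / b)) ^ 2) * G_v v a b /\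
  (1 + mu ^ 2 / 2 * (ln_r r (a / b)) ^ 2) * G_v v a b <= A_v v a b.
Proof.
  intros Hv Hr Ha Hb Hcase mu.
  set (t := ln (a / b)).
  assert (HL := ln_r_sqr_le r (a / b) Hr (mul_ln_div_nonpos r a b Ha Hb Hcase)).
  assert (HAG := AG_ratio_ge v t Hv).
  fold t in HL. fold mu in HAG.
  assert (Hmu : 0 <= mu ^ 2 / 2) by (pose proof (pow2_ge_0 mu); lra).
  set (c := 1 + mu ^ 2 / 2 * ln_r r (a / b) ^ 2).
  assert (Hc1 : 1 <= c).
  { pose proof (Rmult_le_pos _ _ Hmu (pow2_ge_0 (ln_r r (a / b)))). unfold c. lra. }
  assert (Hc : c <= AG_ratio v t).
  { pose proof (Rmult_le_compat_l _ _ _ Hmu HL). unfold c. lra. }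
  rewrite (A_v_eq_G_v_mul_AG_ratio v a b Ha Hb). fold t.
  pose proof (G_v_pos v a b).
  split; nra.
Qed.
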